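(* Let $(\overline M,\varphi,\xi,\eta,g)$ be an almost $(\epsilon)$-contact metric manifold, $k\ge1$, $M$ as in the context, $D=\bigoplus_{i=0}^kD_i$ a $k$-slant distribution on $M$ with invariant component $D_0$ and $D\perp\xi$, and $G$ the orthogonal complement of $D\oplus\langle\xi\rangle$ in $T\overline M|_M$. Then for each $i=1,\dots,k$: $f(w(D_i))=D_i$, and the maps $w|_{D_i}:D_i\to w(D_i)$ and $f|_{w(D_i)}:w(D_i)\to D_i$ are injective at every point; consequently $w(D_i)$ is a distribution of the same rank as $D_i$. Moreover $f(G)=\bigoplus_{i=1}^kD_i$.
   Context: An almost $(\epsilon)$-contact metric manifold $(\overline M,\varphi,\xi,\eta,g)$, $\epsilon\in\{-1,1\}$, is a Riemannian manifold $(\overline M,g)$ with a unit vector field $\xi$, its dual 1-form $\eta(X)=g(X,\xi)$, and a $(1,1)$-tensor field $\varphi$ with $g(\varphi X,Y)=\epsilon g(X,\varphi Y)$ and $\varphi^2=\epsilon(I-\eta\otimes\xi)$. $M$ is either $\overline M$ or an immersed submanifold with $\xi$ tangent to $M$; $\langle\xi\rangle$ is the line bundle spanned by $\xi$. A distribution on $M$ is a smooth subbundle of constant rank of $T\overline M|_M$. For a distribution $D$ and $Z\in T_x\overline M$, $fZ$, $wZ$ are the $g$-orthogonal projections of $\varphi Z$ onto $D_x$ and onto its orthogonal complement $D_x^\perp$ in $T_x\overline M$; $f$ is the component of $\varphi$ into $D$. The angle between a nonzero vector $u$ and a subspace $V$ is $\theta\in[0,\frac\pi2]$ with $\cos\theta=\|\mathrm{pr}_Vu\|/\|u\|$.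 A non-null distribution $D$ is slant with slant angle $\theta\in(0,\frac\pi2]$ if for all $x\in M$, $v\in D_x\setminus\{0\}$: $\varphi v\ne0$ and the angle between $\varphi v$ and $D_x$ is $\theta$. For $k\ge1$, $D$ is a $k$-slant distribution if there is a $g$-orthogonal decomposition $D=\bigoplus_{i=0}^kD_i$ into distributions with $D_i\ne\{0\}$ ($1\le i\le k$), $D_0$ possibly $\{0\}$, and pairwise distinct $\theta_1,\dots,\theta_k\in(0,\frac\pi2]$ with: (i) $D_i$ slant with angle $\theta_i$ ($1\le i\le k$); (ii) $\varphi(D_0)\subseteq D_0$; (iii) $f(D_i)\subseteq D_i$ ($1\le i\le k$). $D_0$ is the invariant component. *)

From HB Require Import structures.
From mathcomp Require Import all_boot all_order all_algebra.
From mathcomp Require Import all_classical all_reals all_analysis.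
From Stdlib Require Import ClassicalEpsilon.
Set Implicit Arguments. Unset Strict Implicit. Unset Printing Implicit Defensive.
Import Order.TTheory GRing.Theory Num.Theory.
Local Open Scope ring_scope.

(* Pointwise (linear-algebra) model of T_x Mbar at a point x of M:
   V is a finite-dimensional real vector space, g an inner product on it. *)

Section Defs.
Variables (R : realType) (V : vectType R).

Definition inner_product (g : V -> V -> R) : Prop :=
  [/\ forall a u v w, g (a *: u + v) w = a * g u w + g v w,
      forall u v, g u v = g v u
    & forall u, u != 0 -> 0 < g u u].

Definition gnorm (g : V -> V -> R) (u : V) : R := Num.sqrt (g u u).

Definition almost_eps_contact_metric (eps : R) (phi : 'End(V)) (xi : V)
    (g : V -> V -> R) : Prop :=
  [/\ eps = 1 \/ eps = -1,
      inner_product g,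
      g xi xi = 1,
      forall X Y, g (phi X) Y = eps * g X (phi Y)
    & forall X, phi (phi X) = eps *: (X - g X xi *: xi)].

Definition orthc (g : V -> V -> R) (U : {vspace V}) (u : V) : Prop :=
  forall y, y \in U -> g u y = 0.

Definition gproj (g : V -> V -> R) (P : V -> Prop) (u : V) : V :=
  epsilon (inhabits (0 : V))
    (fun p => P p /\ forall y, P y -> g (u - p) y = 0).

Definition fcomp (g : V -> V -> R) (phi : 'End(V)) (D : {vspace V}) (Z : V) : V :=
  gproj g (fun y => y \in D) (phi Z).
Definition wcomp (g : V -> V -> R) (phi : 'End(V)) (D : {vspace V}) (Z : V) : V :=
  gproj g (orthc g D) (phi Z).

Definition angle_is (g : V -> V -> R) (u : V) (U : {vspace V}) (theta : R) : Prop :=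
  0 <= theta <= pi / 2 /\
  cos theta = gnorm g (gproj g (fun y => y \in U) u) / gnorm g u.

Definition slant_at (g : V -> V -> R) (phi : 'End(V)) (U : {vspace V}) (theta : R) : Prop :=
  [/\ U != 0%VS,
      0 < theta <= pi / 2
    & forall v, v \in U -> v != 0 ->
        phi v != 0 /\ angle_is g (phi v) U theta].

Definition k_slant_at (k : nat) (g : V -> V -> R) (phi : 'End(V))
    (D : {vspace V}) (Ds : 'I_k.+1 -> {vspace V}) (theta : 'I_k.+1 -> R) : Prop :=
  [/\ D = (\sum_(i < k.+1) Ds i)%VS,
      (forall i j, i != j -> forall u v, u \in Ds i -> v \in Ds j -> g u v = 0),
      (forall i j : 'I_k.+1, i != ord0 -> j != ord0 -> i != j -> theta i != theta j)
    & (forall i : 'I_k.+1, i != ord0 -> slant_at g phi (Ds i) (theta i)) /\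
      (forall v, v \in Ds ord0 -> phi v \in Ds ord0) /\
      (forall i : 'I_k.+1, i != ord0 -> forall v, v \in Ds i -> fcomp g phi D v \in Ds i)].

End Defs.

From Pilot Require Import Defs.
From HB Require Import structures.
From mathcomp Require Import all_boot all_order all_algebra.
From mathcomp Require Import all_classical all_reals all_analysis.
From Stdlib Require Import ClassicalEpsilon.
From mathcomp Require Import lra.
Set Implicit Arguments. Unset Strict Implicit. Unset Printing Implicit Defensive.
Import Order.TTheory GRing.Theory Num.Theory.
Local Open Scope ring_scope.

(** Pointwise this is linear algebra in one tangent space.  On a slant
    component [U] of angle [th] preserved by [f], [|f v| = cos th |v|] because
    [|phi v| = |v|] for [v] orthogonal to [xi]; polarising and moving [phi]
    across [g] ([g (phi X) Y = eps g X (phi Y)]) gives [f (f v) = eps cos^2 th v].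
    As [f (phi v) = eps v] on [D], it follows that
    [f (w v) = f (phi v - f v) = eps sin^2 th v], a nonzero multiple of [v],
    and every claim about [w (D_i)] is a consequence.  For [f (G)]: [w (D_i)] lies
    in [G], and conversely for [u] in [G] the vector [f u] of [D] is orthogonal
    to the [phi]-invariant [D_0], since [g (f u) z = g (phi u) z = eps g u (phi z) = 0]. *)

Lemma linear_lfun (K : fieldType) (uT vT : vectType K) (h : uT -> vT) :
  linear h -> exists F : 'Hom(uT, vT), F =1 h.
Proof.
move=> h_lin.
pose hL := HB.pack_for {linear uT -> vT} h (GRing.isLinear.Build K uT vT *:%R h h_lin).
exists (linfun hL).
by move=> v; rewrite lfunE.
Qed.

Lemma sumv_sub_image (K : fieldType) (uT vT : vectType K) (I : finType) (P : pred I)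
    (Us : I -> {vspace vT}) (A : uT -> Prop) (h : uT -> vT) :
  A 0 -> (forall u v, A u -> A v -> A (u + v)) ->
  h 0 = 0 -> {morph h : u v / u + v} ->
  (forall i, P i -> forall y, y \in Us i -> exists2 u, A u & y = h u) ->
  forall y, y \in (\sum_(i | P i) Us i)%VS -> exists2 u, A u & y = h u.
Proof.
move=> A0 AD h0 hD Us_img.
apply: (big_ind (fun S : {vspace vT} => forall y, y \in S -> exists2 u, A u & y = h u)) => //.
- by move=> y; rewrite memv0 => /eqP ->; exists 0.
- move=> S1 S2 IH1 IH2 _ /memv_addP [y1 /IH1 [u1 Au1 ->] [y2 /IH2 [u2 Au2 ->] ->]].
  by exists (u1 + u2); [apply: AD | rewrite hD].
Qed.

Section InnerProduct.
Variables (R : realType) (V : vectType R) (g : V -> V -> R).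
Hypothesis g_ip : inner_product g.

Lemma ipC u v : g u v = g v u.
Proof. by case: g_ip. Qed.

Lemma ip0l w : g 0 w = 0.
Proof.
case: g_ip => g_lin _ _; have /eqP := g_lin 1 0 0 w.
by rewrite scaler0 addr0 mul1r eq_sym -subr_eq0 addrK => /eqP.
Qed.

Lemma ipDl u v w : g (u + v) w = g u w + g v w.
Proof. by case: g_ip => g_lin _ _; rewrite -{1}[u]scale1r g_lin mul1r. Qed.

Lemma ipZl a u w : g (a *: u) w = a * g u w.
Proof. by case: g_ip => g_lin _ _; rewrite -[a *: u]addr0 g_lin ip0l addr0. Qed.

Lemma ipBl u v w : g (u - v) w = g u w - g v w.
Proof. by rewrite ipDl -scaleN1r ipZl mulN1r. Qed.

Lemma ip0r w : g w 0 = 0.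
Proof. by rewrite ipC ip0l. Qed.

Lemma ipDr u v w : g w (u + v) = g w u + g w v.
Proof. by rewrite ipC ipDl !(ipC w). Qed.

Lemma ipBr u v w : g w (u - v) = g w u - g w v.
Proof. by rewrite ipC ipBl !(ipC w). Qed.

Lemma ipZr a u w : g w (a *: u) = a * g w u.
Proof. by rewrite ipC ipZl ipC. Qed.

Lemma ip_self_gt0 u : u != 0 -> 0 < g u u.
Proof. by case: g_ip => _ _; apply. Qed.

Lemma ip_self_ge0 u : 0 <= g u u.
Proof. by have [->|/ip_self_gt0/ltW //] := eqVneq u 0; rewrite ip0l. Qed.

Lemma ip_self_eq0 u : g u u = 0 -> u = 0.
Proof. by move=> uu0; apply/eqP; apply: contraT => /ip_self_gt0; rewrite uu0 ltxx. Qed.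

Lemma ip_sumv_eq0 (I : finType) (P : pred I) (Us : I -> {vspace V}) y :
  (forall i, P i -> forall x, x \in Us i -> g x y = 0) ->
  forall x, x \in (\sum_(i | P i) Us i)%VS -> g x y = 0.
Proof.
move=> Us_orth.
apply: (big_ind (fun S : {vspace V} => forall x, x \in S -> g x y = 0)) => //.
- by move=> x; rewrite memv0 => /eqP ->; rewrite ip0l.
- move=> S1 S2 IH1 IH2 _ /memv_addP [x1 /IH1 x1y [x2 /IH2 x2y ->]].
  by rewrite ipDl x1y x2y addr0.
Qed.

Lemma ip_polarization (U : {vspace V}) (h : V -> V) c :
  {morph h : u v / u + v} ->
  (forall v, v \in U -> g (h v) (h v) = c * g v v) ->
  forall u v, u \in U -> v \in U -> g (h u) (h v) = c * g u v.
Proof.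
move=> hD h_sq u v Hu Hv; have := h_sq _ (rpredD Hu Hv).
rewrite hD !ipDl !ipDr !h_sq // (ipC (h v)) (ipC v) => uv_sq.
lra.
Qed.

Local Notation pr U := (gproj g (fun y => y \in U)).

Lemma gproj_exists_span (s : seq V) u :
  exists2 p, p \in span s & forall y, y \in span s -> g (u - p) y = 0.
Proof.
elim: s u => [|x s IHs] u.
  by exists 0 => [|y]; rewrite ?mem0v // span_nil memv0 => /eqP ->; rewrite ip0r.
have [p Hp up_orth] := IHs u; have [q Hq xq_orth] := IHs x.
have s_sub : (span s <= span (x :: s))%VS by rewrite span_cons addvSr.
set x' := x - q in xq_orth *.
have x'_span : x' \in span (x :: s).
  by rewrite rpredB ?(subvP s_sub _ Hq) // memv_span ?mem_head.
have span_consE y : y \in span (x :: s) ->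
    exists a, exists2 z, z \in span s & y = a *: x' + z.
  rewrite span_cons => /memv_addP [_ /vlineP [a ->] [z Hz ->]].
  by exists a, (a *: q + z); rewrite ?rpredD ?rpredZ // scalerBr addrA subrK.
clearbody x'.
have [x'0 | x'_neq0] := eqVneq x' 0.
  exists p; first exact: subvP s_sub _ Hp.
  by move=> _ /span_consE [a [z Hz ->]]; rewrite x'0 scaler0 add0r up_orth.
(* Gram-Schmidt: correct p along the component x' of x orthogonal to span s. *)
exists (p + (g (u - p) x' / g x' x') *: x').
  by rewrite rpredD ?rpredZ ?(subvP s_sub _ Hp).
move=> _ /span_consE [a [z Hz ->]].
rewrite opprD addrA ipBl !ipDr !ipZr !ipZl (up_orth _ Hz) (xq_orth _ Hz).
by rewrite divfK ?gt_eqF ?ip_self_gt0 // !mulr0 !addr0 subrr.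
Qed.

Lemma gproj_exists (U : {vspace V}) u :
  exists2 p, p \in U & forall y, y \in U -> g (u - p) y = 0.
Proof. by rewrite -(span_basis (vbasisP U)); apply: gproj_exists_span. Qed.

Lemma gproj_unique (P : V -> Prop) u p :
  (forall x y, P x -> P y -> P (x - y)) ->
  P p -> (forall y, P y -> g (u - p) y = 0) -> gproj g P u = p.
Proof.
move=> PB Pp up_orth; rewrite /gproj.
have [] := epsilon_spec (inhabits 0) (fun q => P q /\ forall y, P y -> g (u - q) y = 0)
  (ex_intro _ p (conj Pp up_orth)).
move: (epsilon _ _) => q Pq uq_orth.
apply/eqP; rewrite -subr_eq0; apply/eqP/ip_self_eq0.
have qpE : q - p = (u - p) - (u - q) by rewrite [RHS]addrC opprB addrA subrK.
by rewrite {1}qpE ipBl up_orth ?uq_orth ?subrr //; apply: PB.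
Qed.

Lemma gprojE (U : {vspace V}) u p :
  p \in U -> (forall y, y \in U -> g (u - p) y = 0) -> pr U u = p.
Proof. by apply: gproj_unique => x y; apply: rpredB. Qed.

Lemma gproj_mem (U : {vspace V}) u : pr U u \in U.
Proof. by have [p Hp up_orth] := gproj_exists U u; rewrite (gprojE Hp up_orth). Qed.

Lemma gproj_orth (U : {vspace V}) u y : y \in U -> g (u - pr U u) y = 0.
Proof.
by have [p Hp up_orth] := gproj_exists U u; rewrite (gprojE Hp up_orth); apply: up_orth.
Qed.

Lemma gproj_id (U : {vspace V}) x : x \in U -> pr U x = x.
Proof. by move=> Hx; apply: gprojE => // y _; rewrite subrr ip0l. Qed.

Lemma gproj_linear (U : {vspace V}) : linear (pr U).
Proof.
move=> a u v; apply: gprojE => [|y Hy]; first by rewrite rpredD ?rpredZ ?gproj_mem.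
have -> : a *: u + v - (a *: pr U u + pr U v) = a *: (u - pr U u) + (v - pr U v).
  by rewrite scalerBr opprD addrACA.
by rewrite ipDl ipZl !gproj_orth // mulr0 addr0.
Qed.

Lemma gproj_orthc (U : {vspace V}) u : gproj g (orthc g U) u = u - pr U u.
Proof.
apply: gproj_unique => [x y x_orth y_orth z Hz | z Hz | z z_orth].
- by rewrite ipBl x_orth ?y_orth ?subrr.
- exact: gproj_orth.
- by rewrite opprB addrC subrK ipC z_orth ?gproj_mem.
Qed.

End InnerProduct.

Section AlmostContact.
Variables (R : realType) (V : vectType R) (eps : R) (phi : 'End(V)) (xi : V).
Variable g : V -> V -> R.
Hypothesis contact : almost_eps_contact_metric eps phi xi g.

Lemma contact_ip : inner_product g.
Proof. by case: contact. Qed.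

Lemma eps_neq0 : eps != 0.
Proof. by case: contact => [[]-> _ _ _ _]; rewrite ?oppr_eq0 oner_eq0. Qed.

Lemma ip_phil X Y : g (phi X) Y = eps * g X (phi Y).
Proof. by case: contact. Qed.

Lemma phi_phi X : phi (phi X) = eps *: (X - g X xi *: xi).
Proof. by case: contact. Qed.

Lemma phi_xi : phi xi = 0.
Proof.
have phi2_xi : phi (phi xi) = 0.
  by case: contact => _ _ xi1 _ ->; rewrite xi1 scale1r subrr scaler0.
by apply: (ip_self_eq0 contact_ip); rewrite ip_phil phi2_xi (ip0r contact_ip) mulr0.
Qed.

Lemma eps_sqr : eps * eps = 1.
Proof. by case: contact => [[]-> _ _ _ _]; rewrite ?mulrNN mulr1. Qed.

Lemma ip_phi_phi X Y : g (phi X) (phi Y) = g X Y - g X xi * g Y xi.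
Proof.
rewrite ip_phil phi_phi (ipZr contact_ip) (ipBr contact_ip) (ipZr contact_ip).
by rewrite mulrA eps_sqr mul1r mulrC.
Qed.

Section Components.
Variable D : {vspace V}.
Local Notation f := (fcomp g phi D).
Local Notation w := (wcomp g phi D).

Lemma fcomp_mem v : f v \in D.
Proof. exact: gproj_mem contact_ip _ _. Qed.

Lemma ip_fcompl v y : y \in D -> g (f v) y = g (phi v) y.
Proof.
move=> Hy; apply/eqP; rewrite eq_sym -subr_eq0 -(ipBl contact_ip).
by rewrite (gproj_orth contact_ip).
Qed.

Lemma wcompE v : w v = phi v - f v.
Proof. exact: gproj_orthc contact_ip _ _. Qed.

Lemma wcomp_orth v y : y \in D -> g (w v) y = 0.
Proof. by move=> Hy; rewrite wcompE (gproj_orth contact_ip). Qed.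

Lemma fcomp_linear : linear f.
Proof. by move=> a u v; rewrite /fcomp linearP (gproj_linear contact_ip). Qed.

Lemma fcompD u v : f (u + v) = f u + f v.
Proof. by rewrite -{1}[u]scale1r fcomp_linear scale1r. Qed.

Lemma fcompB u v : f (u - v) = f u - f v.
Proof. by rewrite addrC -scaleN1r fcomp_linear scaleN1r addrC. Qed.

Lemma fcomp0 : f 0 = 0.
Proof. by rewrite /fcomp linear0 (gproj_id contact_ip) ?mem0v. Qed.

Lemma wcomp_linear : linear w.
Proof. by move=> a u v; rewrite !wcompE fcomp_linear linearP scalerBr opprD addrACA. Qed.

Lemma fcomp_orthc (D0 D1 : {vspace V}) u :
  D = (D0 + D1)%VS -> (forall x y, x \in D1 -> y \in D0 -> g x y = 0) ->
  (forall v, v \in D0 -> phi v \in D0) -> orthc g D u -> f u \in D1.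
Proof.
move=> DE D10_orth D0_inv u_orth.
have D0D : (D0 <= D)%VS by rewrite DE addvSl.
have fu_orth x0 : x0 \in D0 -> g (f u) x0 = 0.
  move=> Hx0; rewrite ip_fcompl ?(subvP D0D) // ip_phil u_orth ?mulr0 //.
  by rewrite (subvP D0D) ?D0_inv.
have : f u \in (D0 + D1)%VS by rewrite -DE fcomp_mem.
move=> /memv_addP [x0 Hx0 [x1 Hx1 fuE]].
suff x00 : x0 = 0 by rewrite fuE x00 add0r.
apply: (ip_self_eq0 contact_ip); have := fu_orth _ Hx0.
by rewrite fuE (ipDl contact_ip) (D10_orth x1 x0) // addr0.
Qed.

Hypothesis D_orth_xi : forall v, v \in D -> g v xi = 0.

Lemma wcomp_orthc v : orthc g (D + <[xi]>) (w v).
Proof.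
move=> _ /memv_addP [y Hy [_ /vlineP [a ->] ->]].
rewrite (ipDr contact_ip) (ipZr contact_ip) wcomp_orth // wcompE (ipBl contact_ip).
by rewrite ip_phil phi_xi (ip0r contact_ip) D_orth_xi ?fcomp_mem // subr0 !mulr0 add0r.
Qed.

Lemma fcomp_phi v : v \in D -> f (phi v) = eps *: v.
Proof.
move=> Hv; rewrite /fcomp phi_phi D_orth_xi // scale0r subr0.
by rewrite (gproj_id contact_ip) ?rpredZ.
Qed.

Section Slant.
Variables (U : {vspace V}) (th : R).
Hypotheses (UD : (U <= D)%VS) (U_slant : slant_at g phi U th).
Hypothesis fU : forall v, v \in U -> f v \in U.

Lemma gproj_phi_slant v : v \in U -> gproj g (fun y => y \in U) (phi v) = f v.
Proof.
move=> Hv; apply: (gprojE contact_ip); first exact: fU.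
by move=> y Hy; rewrite -wcompE wcomp_orth ?(subvP UD).
Qed.

Lemma ip_fcomp_slant v : v \in U -> g (f v) (f v) = cos th ^+ 2 * g v v.
Proof.
move=> Hv; have [->|v_neq0] := eqVneq v 0.
  by rewrite fcomp0 !(ip0l contact_ip) mulr0.
have [_ _ /(_ v Hv v_neq0) [_ [_]]] := U_slant.
rewrite gproj_phi_slant // /Defs.gnorm ip_phi_phi D_orth_xi ?(subvP UD) // mulr0 subr0 => ->.
rewrite expr_div_n !sqr_sqrtr ?(ip_self_ge0 contact_ip) // divfK //.
by rewrite gt_eqF ?(ip_self_gt0 contact_ip).
Qed.

Lemma fcompK_slant v : v \in U -> f (f v) = (eps * cos th ^+ 2) *: v.
Proof.
move=> Hv; have fD u : u \in U -> f u \in D by move=> Hu; rewrite (subvP UD) ?fU.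
have polar := ip_polarization contact_ip fcompD ip_fcomp_slant.
apply/eqP; rewrite -subr_eq0; apply/eqP/(ip_self_eq0 contact_ip).
set z := _ - _; have Hz : z \in U by rewrite rpredB ?rpredZ ?fU.
suff z_orth u : u \in U -> g z u = 0 by apply: z_orth.
move=> Hu; rewrite (ipBl contact_ip) ip_fcompl ?(subvP UD) ?fU // ip_phil.
rewrite (ipC contact_ip _ (phi u)) -ip_fcompl ?fD // polar // (ipZl contact_ip).
by rewrite (ipC contact_ip u) mulrA subrr.
Qed.

Lemma fcomp_wcomp_slant v : v \in U -> f (w v) = (eps * sin th ^+ 2) *: v.
Proof.
move=> Hv; rewrite wcompE fcompB fcomp_phi ?(subvP UD) // fcompK_slant // -scalerBl.
by rewrite -{1}[eps]mulr1 -(cos2Dsin2 th) mulrDr addrAC subrr add0r.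
Qed.

Lemma slant_coef_neq0 : eps * sin th ^+ 2 != 0.
Proof.
rewrite mulf_neq0 ?eps_neq0 // expf_neq0 // gt_eqF // sin_gt0_pi //.
case: U_slant => _ /andP [th_gt0 th_le] _.
by have pi_pos := pi_gt0 R; apply/andP; split; lra.
Qed.

Lemma fcomp_wcomp_slant_image y : (exists2 v, v \in U & y = f (w v)) <-> y \in U.
Proof.
split=> [[v Hv ->] | Hy]; first by rewrite fcomp_wcomp_slant ?rpredZ.
exists ((eps * sin th ^+ 2)^-1 *: y); first by rewrite rpredZ.
by rewrite fcomp_wcomp_slant ?rpredZ // scalerA mulfV ?slant_coef_neq0 // scale1r.
Qed.

Lemma wcomp_slant_inj : {in U &, injective w}.
Proof.
move=> u v Hu Hv /(congr1 f); rewrite !fcomp_wcomp_slant //.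
exact/scalerI/slant_coef_neq0.
Qed.

Lemma fcomp_inj_on_wcomp_slant a b :
  (exists2 u, u \in U & a = w u) -> (exists2 u, u \in U & b = w u) -> f a = f b -> a = b.
Proof.
move=> [u Hu ->] [v Hv ->]; rewrite !fcomp_wcomp_slant //.
by move/(scalerI slant_coef_neq0) ->.
Qed.

Lemma wcomp_slant_image : exists W : {vspace V},
  (forall y, y \in W <-> exists2 v, v \in U & y = w v) /\ \dim W = \dim U.
Proof.
have [F FE] := linear_lfun wcomp_linear.
exists (F @: U)%VS; split=> [y|].
  split=> [/memv_imgP [v Hv ->] | [v Hv ->]]; first by exists v; rewrite ?FE.
  by rewrite -FE memv_img.
apply: limg_dim_eq; apply/eqP; rewrite -subv0; apply/subvP => x.
rewrite memv_cap memv_ker memv0 => /andP [Hx /eqP Fx0].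
by apply/eqP/wcomp_slant_inj; rewrite ?mem0v // -!FE Fx0 linear0.
Qed.

End Slant.
End Components.
End AlmostContact.

Theorem mainTheorem6 (R : realType) (V : vectType R) (eps : R) (phi : 'End(V))
    (xi : V) (g : V -> V -> R) (k : nat) (D : {vspace V})
    (Ds : 'I_k.+1 -> {vspace V}) (theta : 'I_k.+1 -> R) :
  (1 <= k)%N ->
  almost_eps_contact_metric eps phi xi g ->
  k_slant_at g phi D Ds theta ->
  (forall v, v \in D -> g v xi = 0) ->
  let f := fcomp g phi D in
  let w := wcomp g phi D in
  let G := orthc g (D + <[xi]>)%VS in
  (forall i : 'I_k.+1, i != ord0 ->
     [/\ (forall y, (exists2 v, v \in Ds i & y = f (w v)) <-> y \in Ds i),
         {in Ds i &, injective w},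
         (forall a b, (exists2 u, u \in Ds i & a = w u) ->
                      (exists2 u, u \in Ds i & b = w u) -> f a = f b -> a = b)
       & exists W : {vspace V},
           (forall y, y \in W <-> exists2 v, v \in Ds i & y = w v)
           /\ \dim W = \dim (Ds i)])
  /\ (forall y, (exists2 u, G u & y = f u) <->
                y \in (\sum_(i < k.+1 | i != ord0) Ds i)%VS).
Proof.
move=> _ contact [DE Ds_orth _ [Ds_slant [Ds0_inv Ds_finv]]] D_xi f w G.
have g_ip := contact_ip contact.
have DsD i : (Ds i <= D)%VS by rewrite DE (sumv_sup i).
split=> [i i0 | y].
  move: (DsD i) (Ds_slant i i0) (Ds_finv i i0) => DsiD Dsi_slant Dsi_finv.
  split.
  - exact (fcomp_wcomp_slant_image contact D_xi DsiD Dsi_slant Dsi_finv).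
  - exact (wcomp_slant_inj contact D_xi DsiD Dsi_slant Dsi_finv).
  - exact (fcomp_inj_on_wcomp_slant contact D_xi DsiD Dsi_slant Dsi_finv).
  - exact (wcomp_slant_image contact D_xi DsiD Dsi_slant Dsi_finv).
split=> [[u Gu ->] | Hy].
  apply: (fcomp_orthc contact (D0 := Ds ord0)); first by rewrite DE (bigD1 ord0).
  - move=> x z Hx Hz; apply: (ip_sumv_eq0 g_ip _ Hx) => j j0 t Ht.
    exact: Ds_orth j ord0 j0 t z Ht Hz.
  - exact: Ds0_inv.
  - by move=> z Hz; apply/Gu/(subvP (addvSl _ _)).
apply: (sumv_sub_image _ _ (fcomp0 contact D) (fcompD contact D) _ Hy).
- by move=> z _; rewrite (ip0l g_ip).
- by move=> u v Gu Gv z Hz; rewrite (ipDl g_ip) Gu ?Gv ?addr0.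
- move=> i i0 z.
  move/(fcomp_wcomp_slant_image contact D_xi (DsD i) (Ds_slant i i0) (Ds_finv i i0)).
  by move=> [v Hv ->]; exists (w v); first exact (wcomp_orthc contact D_xi v).
Qed.
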